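(* Let $p$ be a probability distribution on the (finite) set of trajectories. Suppose there exists a policy $\pi^\circ \in \Pi$ whose trajectory distribution satisfies $$\pi^\circ(\tau) = \frac{\sqrt{p(\tau)}}{\sum_{\tau'} \sqrt{p(\tau')}} \quad \text{for all trajectories } \tau.$$ Then there exists a (time-indexed) reward function $r = (r_t)_{t=1}^T$, $r_t : \mathcal{S}\times\mathcal{A} \to [-\infty,\infty)$, such that the meta-POMDP and the MaxEnt RL problem for $r$ have the same solutions: $$\arg\min_{\pi \in \Pi} \mathrm{Regret}_p(\pi) = \arg\max_{\pi\in\Pi} J(\pi, r).$$
   Context: Finite-horizon MDP: finite state set $\mathcal{S}$, finite action set $\mathcal{A}$, horizon $T\ge 1$, initial distribution $p_1$ on $\mathcal{S}$, transition kernel $p(s'\mid s,a)$. A trajectory is $\tau=(s_1,a_1,\dots,s_T,a_T)$. A policy is a Markov (possibly time-dependent) policy $\pi=(\pi_t(\cdot\mid s))_{t=1}^T$, each $\pi_t(\cdot\mid s)$ a probability distribution on $\mathcal{A}$; we write $\pi(a_t\mid s_t)$ for $\pi_t(a_t\mid s_t)$, and $\Pi$ denotes the set of all such policies. The trajectory distribution of $\pi$ is $\pi(\tau)=p_1(s_1)\prod_{t=1}^{T}\pi(a_t\mid s_t)\prod_{t=1}^{T-1}p(s_{t+1}\mid s_t,a_t)$, and $\mathbb{E}_\pi$ denotes expectation over $\tau\sim\pi(\tau)$. For a (possibly time-indexed) reward $r_t(s,a)$ (values in $[-\infty,\infty)$ allowed), the MaxEnt RL objective is $J(\pi,r)=\mathbb{E}_\pi\big[\sum_{t=1}^T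 r_t(s_t,a_t)\big]+\mathcal{H}_\pi[a\mid s]$, where $\mathcal{H}_\pi[a\mid s]=\mathbb{E}_\pi\big[-\sum_{t=1}^T\log\pi(a_t\mid s_t)\big]$ (with $0\log 0=0$); the MaxEnt RL problem is to maximize $J(\cdot,r)$ over $\Pi$. Meta-POMDP: given a target distribution $p$ over trajectories (a belief over an unobserved target trajectory $\tau^*$), the agent repeatedly runs episodes with the same policy until it produces $\tau^*$; its regret is the expected number of episodes, $\mathrm{Regret}_p(\pi)=\sum_{\tau:\,p(\tau)>0} \frac{p(\tau)}{\pi(\tau)}$, with the convention $p(\tau)/0=+\infty$. Solving the meta-POMDP means minimizing $\mathrm{Regret}_p$ over $\Pi$. *)

From Stdlib Require Import Reals List Bool.
Import ListNotations.
Open Scope R_scope.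
Set Implicit Arguments.

Definition finite_enum (X : Type) (e : list X) : Prop :=
  NoDup e /\ forall x : X, In x e.

Definition sumR {X : Type} (l : list X) (f : X -> R) : R :=
  fold_right (fun x acc => f x + acc) 0 l.

Definition Rltb (x y : R) : bool := if Rlt_dec x y then true else false.

Inductive ereal : Type := EFin (x : R) | EPInf | ENInf.

Definition ele (x y : ereal) : Prop :=
  match x, y with
  | ENInf, _ => True
  | _, EPInf => True
  | EFin a, EFin b => a <= b
  | _, _ => False
  end.

Definition traj (St Ac : Type) := list (St * Ac).

Fixpoint all_seqs {X : Type} (l : list X) (n : nat) : list (list X) :=
  match n with
  | O => [ [] ]
  | S n' => flat_map (fun x => map (cons x) (all_seqs l n')) l
  end.

Definition all_trajs {St Ac : Type} (eS : list St) (eA : list Ac) (T : nat)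
  : list (traj St Ac) := all_seqs (list_prod eS eA) T.

(* Markov time-dependent policy: pi t s a = pi_t(a | s), t = 1..T *)
Definition policy (St Ac : Type) := nat -> St -> Ac -> R.

Definition is_policy {St Ac : Type} (eS : list St) (eA : list Ac) (T : nat)
  (pi : policy St Ac) : Prop :=
  forall t, (1 <= t <= T)%nat ->
    forall s, (forall a, 0 <= pi t s a) /\ sumR eA (fun a => pi t s a) = 1.

Fixpoint traj_prob_from {St Ac : Type} (P : St -> Ac -> St -> R)
  (pi : policy St Ac) (t : nat) (s : St) (a : Ac) (rest : traj St Ac) : R :=
  pi t s a *
  match rest with
  | [] => 1
  | (s', a') :: rest' => P s a s' * traj_prob_from P pi (S t) s' a' rest'
  end.

(* pi(tau) = p1(s1) prod_t pi_t(a_t|s_t) prod_{t<T} p(s_{t+1}|s_t,a_t) *)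
Definition traj_prob {St Ac : Type} (p1 : St -> R) (P : St -> Ac -> St -> R)
  (pi : policy St Ac) (tau : traj St Ac) : R :=
  match tau with
  | [] => 1
  | (s, a) :: rest => p1 s * traj_prob_from P pi 1 s a rest
  end.

Fixpoint sum_steps {St Ac : Type} (f : nat -> St -> Ac -> R) (t : nat)
  (tau : traj St Ac) : R :=
  match tau with
  | [] => 0
  | (s, a) :: tau' => f t s a + sum_steps f (S t) tau'
  end.

(* rewards with values in [-oo, oo): None stands for -oo *)
Definition reward (St Ac : Type) := nat -> St -> Ac -> option R.

Fixpoint reward_sum {St Ac : Type} (r : reward St Ac) (t : nat)
  (tau : traj St Ac) : option R :=
  match tau with
  | [] => Some 0
  | (s, a) :: tau' =>
      match r t s a, reward_sum r (S t) tau' with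
      | Some x, Some y => Some (x + y)
      | _, _ => None
      end
  end.

(* E_pi[sum_t r_t] + H_pi[a|s], with 0 * (-oo) = 0 and 0 log 0 = 0:
   -oo iff some trajectory of positive probability has reward -oo. *)
Definition J_obj {St Ac : Type} (eS : list St) (eA : list Ac) (T : nat)
  (p1 : St -> R) (P : St -> Ac -> St -> R)
  (pi : policy St Ac) (r : reward St Ac) : ereal :=
  if existsb (fun tau =>
        Rltb 0 (traj_prob p1 P pi tau) &&
        match reward_sum r 1 tau with None => true | Some _ => false end)
      (all_trajs eS eA T)
  then ENInf
  else EFin (sumR (all_trajs eS eA T) (fun tau =>
         if Rltb 0 (traj_prob p1 P pi tau) then
           traj_prob p1 P pi tau *
           (match reward_sum r 1 tau with Some x => x | None => 0 end
            - sum_steps (fun t s a => ln (pi t s a)) 1 tau)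
         else 0)).

(* Regret_p(pi) = sum_{tau : p(tau) > 0} p(tau) / pi(tau), with p/0 = +oo *)
Definition regret {St Ac : Type} (eS : list St) (eA : list Ac) (T : nat)
  (p1 : St -> R) (P : St -> Ac -> St -> R)
  (p : traj St Ac -> R) (pi : policy St Ac) : ereal :=
  if existsb (fun tau =>
        Rltb 0 (p tau) && negb (Rltb 0 (traj_prob p1 P pi tau)))
      (all_trajs eS eA T)
  then EPInf
  else EFin (sumR (all_trajs eS eA T) (fun tau =>
         if Rltb 0 (p tau) then p tau / traj_prob p1 P pi tau else 0)).

Definition argmin_regret {St Ac : Type} (eS : list St) (eA : list Ac) (T : nat)
  (p1 : St -> R) (P : St -> Ac -> St -> R)
  (p : traj St Ac -> R) (pi : policy St Ac) : Prop :=
  is_policy eS eA T pi /\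
  forall pi', is_policy eS eA T pi' ->
    ele (regret eS eA T p1 P p pi) (regret eS eA T p1 P p pi').

Definition argmax_J {St Ac : Type} (eS : list St) (eA : list Ac) (T : nat)
  (p1 : St -> R) (P : St -> Ac -> St -> R)
  (r : reward St Ac) (pi : policy St Ac) : Prop :=
  is_policy eS eA T pi /\
  forall pi', is_policy eS eA T pi' ->
    ele (J_obj eS eA T p1 P pi' r) (J_obj eS eA T p1 P pi r).

(* Take the reward r_t(s, a) = log pic_t(a | s), where pic is the policy whose trajectory
   distribution is sqrt p / Z with Z = sum_tau sqrt (p tau). The transition terms of
   log pi(tau) and log pic(tau) coincide, so J(pi, r) = -KL(pi(tau) || pic(tau)); by Gibbs'
   inequality it is maximal exactly when pi(tau) = pic(tau) on every trajectory. On the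
   other side, p / q >= 2 Z sqrt p - Z^2 q termwise (Cauchy-Schwarz), so the regret is at
   least Z^2, with equality exactly when pi(tau) = sqrt (p tau) / Z = pic(tau). Both
   optimisation problems are thus solved by the policies inducing the trajectory
   distribution of pic. *)

From Stdlib Require Import Reals List Bool Lra Lia Psatz.
Import ListNotations.
Open Scope R_scope.

Lemma Rltb_spec x y : Bool.reflect (x < y) (Rltb x y).
Proof. unfold Rltb; destruct (Rlt_dec x y); constructor; assumption. Qed.

Lemma existsb_false_iff {X} (f : X -> bool) l :
  existsb f l = false <-> forall x, In x l -> f x = false.
Proof.
  rewrite <- Bool.not_true_iff_false, existsb_exists. split.
  - intros H x Hx. apply Bool.not_true_iff_false. intro Hf. apply H. now exists x.
  - intros H [x [Hx Hf]]. rewrite H in Hf by assumption. discriminate.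
Qed.

Lemma existsb_ext_in {X} (f g : X -> bool) l :
  (forall x, In x l -> f x = g x) -> existsb f l = existsb g l.
Proof.
  induction l as [|a l IH]; intros H; simpl; [reflexivity|].
  rewrite H, IH; [reflexivity | intros; apply H | ]; simpl; auto.
Qed.

Section SumR.
Context {X : Type}.
Implicit Types (l : list X) (f g : X -> R).

Lemma sumR_cons a l f : sumR (a :: l) f = f a + sumR l f.
Proof. reflexivity. Qed.

Lemma sumR_ext_in l f g : (forall x, In x l -> f x = g x) -> sumR l f = sumR l g.
Proof.
  induction l as [|a l IH]; intros H; [reflexivity|]. rewrite !sumR_cons.
  f_equal; [apply H | apply IH; intros; apply H]; simpl; auto.
Qed.

Lemma sumR_le_in l f g : (forall x, In x l -> f x <= g x) -> sumR l f <= sumR l g.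
Proof.
  induction l as [|a l IH]; intros H; [apply Rle_refl|]. rewrite !sumR_cons.
  apply Rplus_le_compat; [apply H | apply IH; intros; apply H]; simpl; auto.
Qed.

Lemma sumR_le_eq_in l f g :
  (forall x, In x l -> f x <= g x) -> sumR l g <= sumR l f ->
  forall x, In x l -> f x = g x.
Proof.
  induction l as [|a l IH]; intros H Hs x Hx; [destruct Hx|]. rewrite !sumR_cons in Hs.
  assert (Ha : f a <= g a) by (apply H; simpl; auto).
  assert (Hl : sumR l f <= sumR l g) by (apply sumR_le_in; intros; apply H; simpl; auto).
  destruct Hx as [<-|Hx]; [lra|].
  apply IH; [intros; apply H; simpl; auto | lra | assumption].
Qed.

Lemma sumR_le_with_eq l f g (Q : X -> Prop) :
  (forall x, In x l -> f x <= g x /\ (f x = g x -> Q x)) ->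
  sumR l f <= sumR l g /\ (sumR l g <= sumR l f -> forall x, In x l -> Q x).
Proof.
  intros H. split.
  - apply sumR_le_in. intros x Hx. apply H, Hx.
  - intros Hs x Hx. apply (H x Hx).
    apply (sumR_le_eq_in l f g); [intros; apply H|..]; assumption.
Qed.

Lemma sumR_minus l f g : sumR l (fun x => f x - g x) = sumR l f - sumR l g.
Proof. induction l as [|a l IH]; simpl; [ring|]. rewrite IH; ring. Qed.

Lemma sumR_scal l c f : sumR l (fun x => c * f x) = c * sumR l f.
Proof. induction l as [|a l IH]; simpl; [ring|]. rewrite IH; ring. Qed.

Lemma sumR_zero l : sumR l (fun _ => 0) = 0.
Proof. induction l as [|a l IH]; simpl; [ring|]. rewrite IH; ring. Qed.

Lemma sumR_app l1 l2 f : sumR (l1 ++ l2) f = sumR l1 f + sumR l2 f.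
Proof. induction l1 as [|a l IH]; simpl; [ring|]. rewrite IH; ring. Qed.

End SumR.

Lemma sumR_map {X Y} (h : X -> Y) l f : sumR (map h l) f = sumR l (fun x => f (h x)).
Proof. induction l as [|a l IH]; simpl; [reflexivity|]. now rewrite IH. Qed.

Lemma sumR_flat_map {X Y} (h : X -> list Y) l f :
  sumR (flat_map h l) f = sumR l (fun x => sumR (h x) f).
Proof. induction l as [|a l IH]; simpl; [reflexivity|]. now rewrite sumR_app, IH. Qed.

Lemma sumR_list_prod {X Y} (l1 : list X) (l2 : list Y) f :
  sumR (list_prod l1 l2) f = sumR l1 (fun x => sumR l2 (fun y => f (x, y))).
Proof.
  induction l1 as [|a l IH]; simpl; [reflexivity|]. now rewrite sumR_app, sumR_map, IH.
Qed.

Lemma sumR_sqrt_pos {X} (l : list X) p :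
  (forall x, In x l -> 0 <= p x) -> sumR l p = 1 -> 0 < sumR l (fun x => sqrt (p x)).
Proof.
  intros Hp Hs.
  destruct (sumR_le_with_eq l (fun _ => 0) (fun x => sqrt (p x)) (fun x => p x = 0))
    as [Hge Hzero].
  { intros x Hx. split; [apply sqrt_pos|]. intros H. apply sqrt_eq_0; auto. }
  rewrite sumR_zero in Hge, Hzero. destruct Hge as [Hgt|Heq]; [assumption|].
  exfalso. rewrite (sumR_ext_in l p (fun _ => 0)) in Hs by (apply Hzero; lra).
  rewrite sumR_zero in Hs. lra.
Qed.

(* Writing [q = x * exp d], this is [exp d >= 1 + d], strict for [d <> 0]. *)
Lemma ln_ratio_bound x q : 0 < x -> 0 < q ->
  x * (ln q - ln x) <= q - x /\ (x * (ln q - ln x) = q - x -> q = x).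
Proof.
  intros Hx Hq. set (d := ln q - ln x).
  assert (Hqd : q = x * exp d).
  { unfold d, Rminus. rewrite exp_plus, exp_Ropp, !exp_ln by assumption. field. lra. }
  split.
  - pose proof (exp_ineq1_le d). rewrite Hqd. nra.
  - intros He. destruct (Req_dec d 0) as [Hd|Hd].
    + rewrite Hqd, Hd, exp_0. ring.
    + pose proof (exp_ineq1 d Hd). rewrite Hqd in He. nra.
Qed.

Definition neg_kl {X} (l : list X) (pi q : X -> R) : ereal :=
  if existsb (fun x => Rltb 0 (pi x) && negb (Rltb 0 (q x))) l then ENInf
  else EFin (sumR l (fun x =>
         if Rltb 0 (pi x) then pi x * (ln (q x) - ln (pi x)) else 0)).

Definition retry_cost {X} (l : list X) (p q : X -> R) : ereal :=
  if existsb (fun x => Rltb 0 (p x) && negb (Rltb 0 (q x))) l then EPInf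
  else EFin (sumR l (fun x => if Rltb 0 (p x) then p x / q x else 0)).

Lemma neg_kl_self {X} (l : list X) q : neg_kl l q q = EFin 0.
Proof.
  unfold neg_kl. rewrite (proj2 (existsb_false_iff _ _)).
  - f_equal. transitivity (sumR l (fun _ => 0)); [|apply sumR_zero].
    apply sumR_ext_in. intros x _. destruct (Rltb 0 (q x)); [ring | reflexivity].
  - intros x _. now destruct (Rltb 0 (q x)).
Qed.

Lemma neg_kl_ext {X} (l : list X) pi pi' q :
  (forall x, In x l -> pi x = pi' x) -> neg_kl l pi q = neg_kl l pi' q.
Proof.
  intros H. unfold neg_kl.
  rewrite (existsb_ext_in _ (fun x => Rltb 0 (pi' x) && negb (Rltb 0 (q x))) l)
    by (intros x Hx; now rewrite H).
  destruct existsb; [reflexivity|]. f_equal. apply sumR_ext_in. intros x Hx. now rewrite H.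
Qed.

Section Gibbs.
Context {X : Type} (l : list X) (pi q : X -> R).
Hypothesis pi_ge0 : forall x, In x l -> 0 <= pi x.
Hypothesis q_ge0 : forall x, In x l -> 0 <= q x.
Hypothesis same_mass : sumR l pi = sumR l q.

Lemma neg_kl_le0 : ele (neg_kl l pi q) (EFin 0) /\
  (ele (EFin 0) (neg_kl l pi q) -> forall x, In x l -> pi x = q x).
Proof.
  unfold neg_kl. destruct existsb eqn:Hsupp; [split; [exact I | intros []]|].
  rewrite existsb_false_iff in Hsupp.
  destruct (sumR_le_with_eq l
    (fun x => if Rltb 0 (pi x) then pi x * (ln (q x) - ln (pi x)) else 0)
    (fun x => q x - pi x) (fun x => pi x = q x)) as [Hle Heq].
  { intros x Hx. specialize (Hsupp x Hx). pose proof (pi_ge0 x Hx). pose proof (q_ge0 x Hx).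
    destruct (Rltb_spec 0 (pi x)) as [Hpi|Hpi].
    - destruct (Rltb_spec 0 (q x)) as [Hq|Hq]; [|discriminate].
      destruct (ln_ratio_bound _ _ Hpi Hq) as [Hb He]. split; [exact Hb|].
      intros Heq. symmetry. now apply He.
    - split; lra. }
  rewrite sumR_minus, same_mass, Rminus_diag in Hle, Heq. simpl. split; assumption.
Qed.

End Gibbs.

(* [2 Z sqrt p - Z^2 q <= p / q] is [(sqrt p - Z q)^2 >= 0] divided by [q]. *)
Lemma retry_term_bound pt qt Z : 0 <= pt -> 0 <= qt -> 0 < Z -> (0 < pt -> 0 < qt) ->
  let f := if Rltb 0 pt then pt / qt else 0 in
  2 * Z * sqrt pt - Z * Z * qt <= f /\ (2 * Z * sqrt pt - Z * Z * qt = f -> qt = sqrt pt / Z).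
Proof.
  intros Hp Hq HZ Hsupp f. unfold f.
  destruct (Rltb_spec 0 pt) as [Hpt|Hpt].
  - specialize (Hsupp Hpt). pose proof (sqrt_sqrt pt Hp) as Hu.
    set (u := sqrt pt) in *.
    assert (Hf : pt / qt * qt = pt) by (field; lra).
    split.
    + apply (Rmult_le_reg_r qt); [lra|]. rewrite Hf.
      pose proof (Rle_0_sqr (u - Z * qt)). unfold Rsqr in *. nra.
    + intros He. assert (Hsq : (u - Z * qt) * (u - Z * qt) = 0).
      { assert (He' : (2 * Z * u - Z * Z * qt) * qt = pt) by (rewrite He; exact Hf). nra. }
      assert (Hu' : u = Z * qt) by (destruct (Rmult_integral _ _ Hsq); lra).
      rewrite Hu'. field. lra.
  - assert (pt = 0) by lra. subst pt. rewrite sqrt_0. split; [nra|].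
    intros He. rewrite Rdiv_0_l. assert (HZq : Z * (Z * qt) = 0) by lra.
    destruct (Rmult_integral _ _ HZq) as [h|h]; [lra|].
    destruct (Rmult_integral _ _ h); lra.
Qed.

Section CauchySchwarz.
Context {X : Type} (l : list X) (p q : X -> R).
Hypothesis p_ge0 : forall x, In x l -> 0 <= p x.
Let Z := sumR l (fun x => sqrt (p x)).
Hypothesis Z_gt0 : 0 < Z.

Lemma retry_cost_ge (q_ge0 : forall x, In x l -> 0 <= q x) (q_mass : sumR l q = 1) :
  ele (EFin (Z * Z)) (retry_cost l p q) /\
  (ele (retry_cost l p q) (EFin (Z * Z)) -> forall x, In x l -> q x = sqrt (p x) / Z).
Proof.
  unfold retry_cost. destruct existsb eqn:Hsupp; [split; [exact I | intros []]|].
  rewrite existsb_false_iff in Hsupp.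
  destruct (sumR_le_with_eq l (fun x => 2 * Z * sqrt (p x) - Z * Z * q x)
    (fun x => if Rltb 0 (p x) then p x / q x else 0) (fun x => q x = sqrt (p x) / Z))
    as [Hle Heq].
  { intros x Hx. apply retry_term_bound; auto. intros Hpx.
    specialize (Hsupp x Hx). destruct (Rltb_spec 0 (p x)); [|lra].
    now destruct (Rltb_spec 0 (q x)). }
  replace (sumR l (fun x => 2 * Z * sqrt (p x) - Z * Z * q x)) with (Z * Z) in Hle, Heq
    by (rewrite sumR_minus, !sumR_scal, q_mass; fold Z; ring).
  simpl. split; assumption.
Qed.

Lemma retry_cost_opt : (forall x, In x l -> q x = sqrt (p x) / Z) ->
  retry_cost l p q = EFin (Z * Z).
Proof.
  intros Hq. unfold retry_cost. rewrite (proj2 (existsb_false_iff _ _)).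
  - f_equal. transitivity (sumR l (fun x => Z * sqrt (p x))); [|now rewrite sumR_scal].
    apply sumR_ext_in. intros x Hx.
    rewrite Hq by assumption. pose proof (sqrt_sqrt (p x) (p_ge0 x Hx)).
    destruct (Rltb_spec 0 (p x)) as [Hpx|Hpx].
    + pose proof (sqrt_lt_R0 _ Hpx). rewrite <- H at 1. field. lra.
    + replace (p x) with 0 by (pose proof (p_ge0 x Hx); lra). rewrite sqrt_0. ring.
  - intros x Hx. destruct (Rltb_spec 0 (p x)) as [Hpx|]; [|reflexivity].
    rewrite Hq by assumption. destruct (Rltb_spec 0 (sqrt (p x) / Z)) as [|Hn]; [reflexivity|].
    exfalso. apply Hn. apply Rdiv_lt_0_compat; [apply sqrt_lt_R0|]; assumption.
Qed.

End CauchySchwarz.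

Section Trajectories.
Context {St Ac : Type}.
Implicit Types (f : nat -> St -> Ac -> R) (tau rest : traj St Ac) (pi : policy St Ac).

Fixpoint prod_steps f (t : nat) tau : R :=
  match tau with
  | [] => 1
  | (s, a) :: tau' => f t s a * prod_steps f (S t) tau'
  end.

Fixpoint Forall_steps (Q : nat -> St -> Ac -> Prop) (t : nat) tau : Prop :=
  match tau with
  | [] => True
  | (s, a) :: tau' => Q t s a /\ Forall_steps Q (S t) tau'
  end.

Lemma Forall_steps_window (Q : nat -> St -> Ac -> Prop) t tau :
  (forall k s a, (t <= k < t + length tau)%nat -> Q k s a) -> Forall_steps Q t tau.
Proof.
  revert t. induction tau as [|[s a] tau IH]; intros t H; simpl; [exact I|].
  split; [apply H | apply IH; intros; apply H]; simpl; lia.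
Qed.

Lemma prod_steps_nonneg f t tau :
  Forall_steps (fun k s a => 0 <= f k s a) t tau -> 0 <= prod_steps f t tau.
Proof.
  revert t. induction tau as [|[s a] tau IH]; intros t H; simpl; [lra|].
  destruct H. apply Rmult_le_pos; auto.
Qed.

Lemma prod_steps_pos_inv f t tau :
  Forall_steps (fun k s a => 0 <= f k s a) t tau -> 0 < prod_steps f t tau ->
  Forall_steps (fun k s a => 0 < f k s a) t tau.
Proof.
  revert t. induction tau as [|[s a] tau IH]; intros t H Hpos; simpl; [exact I|].
  destruct H as [Hf Hrest]. simpl in Hpos. pose proof (prod_steps_nonneg f _ _ Hrest).
  split; [|apply IH; auto]; nra.
Qed.

Lemma prod_steps_pos f t tau :
  Forall_steps (fun k s a => 0 < f k s a) t tau -> 0 < prod_steps f t tau.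
Proof.
  revert t. induction tau as [|[s a] tau IH]; intros t H; simpl; [lra|].
  destruct H. apply Rmult_lt_0_compat; auto.
Qed.

Lemma ln_prod_steps f t tau :
  Forall_steps (fun k s a => 0 < f k s a) t tau ->
  ln (prod_steps f t tau) = sum_steps (fun k s a => ln (f k s a)) t tau.
Proof.
  revert t. induction tau as [|[s a] tau IH]; intros t H; simpl; [apply ln_1|].
  destruct H as [Hf Hrest].
  rewrite ln_mult, IH by (try apply prod_steps_pos; assumption). reflexivity.
Qed.

Definition log_reward pi : reward St Ac :=
  fun t s a => if Rltb 0 (pi t s a) then Some (ln (pi t s a)) else None.

Lemma reward_sum_log_reward_pos pi t tau :
  Forall_steps (fun k s a => 0 < pi k s a) t tau ->
  reward_sum (log_reward pi) t tau = Some (sum_steps (fun k s a => ln (pi k s a)) t tau).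
Proof.
  revert t. induction tau as [|[s a] tau IH]; intros t H; simpl; [reflexivity|].
  destruct H as [Hpi Hrest]. rewrite IH by assumption. unfold log_reward.
  destruct (Rltb_spec 0 (pi t s a)); [reflexivity | contradiction].
Qed.

Lemma reward_sum_log_reward_zero pi t tau :
  prod_steps pi t tau = 0 -> reward_sum (log_reward pi) t tau = None.
Proof.
  revert t. induction tau as [|[s a] tau IH]; intros t H; simpl in *; [lra|].
  unfold log_reward at 1. destruct (Rmult_integral _ _ H) as [Hz|Hz].
  - rewrite Hz. destruct (Rltb_spec 0 0); [lra | reflexivity].
  - rewrite IH by assumption. now destruct Rltb.
Qed.

End Trajectories.

Lemma all_seqs_length {X} (l : list X) n x : In x (all_seqs l n) -> length x = n.
Proof.
  revert x; induction n as [|n IH]; simpl; intros x H.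
  - destruct H as [<-|[]]; reflexivity.
  - apply in_flat_map in H as [y [_ H]]. apply in_map_iff in H as [x' [<- H]].
    simpl. f_equal. auto.
Qed.

Section MDP.
Context {St Ac : Type} (eS : list St) (eA : list Ac) (T : nat)
  (p1 : St -> R) (P : St -> Ac -> St -> R).
Hypothesis p1_ge0 : forall s, 0 <= p1 s.
Hypothesis p1_mass : sumR eS p1 = 1.
Hypothesis P_ge0 : forall s a s', 0 <= P s a s'.
Hypothesis P_mass : forall s a, sumR eS (P s a) = 1.
Implicit Types (tau rest : traj St Ac) (pi : policy St Ac).

Fixpoint trans_prod (s : St) (a : Ac) rest : R :=
  match rest with
  | [] => 1
  | (s', a') :: rest' => P s a s' * trans_prod s' a' rest'
  end.

Definition traj_weight tau : R :=
  match tau with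
  | [] => 1
  | (s, a) :: rest => p1 s * trans_prod s a rest
  end.

Lemma traj_prob_from_factor pi t s a rest :
  traj_prob_from P pi t s a rest = prod_steps pi t ((s, a) :: rest) * trans_prod s a rest.
Proof.
  revert t s a. induction rest as [|[s' a'] rest IH]; intros t s a; simpl; [ring|].
  rewrite IH. simpl. ring.
Qed.

Lemma traj_prob_factor pi tau :
  traj_prob p1 P pi tau = traj_weight tau * prod_steps pi 1 tau.
Proof.
  destruct tau as [|[s a] rest]; simpl; [ring|].
  rewrite traj_prob_from_factor. simpl. ring.
Qed.

Lemma traj_weight_nonneg tau : 0 <= traj_weight tau.
Proof.
  assert (Htrans : forall s a rest, 0 <= trans_prod s a rest).
  { intros s a rest. revert s a. induction rest as [|[s' a'] rest IH]; intros s a; simpl;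
      [lra | apply Rmult_le_pos; auto]. }
  destruct tau as [|[s a] rest]; simpl; [lra | apply Rmult_le_pos; auto].
Qed.

Lemma policy_steps_nonneg pi tau : is_policy eS eA T pi -> In tau (all_trajs eS eA T) ->
  Forall_steps (fun k s a => 0 <= pi k s a) 1 tau.
Proof.
  intros Hpi Htau. apply Forall_steps_window. intros k s a Hk.
  rewrite (all_seqs_length _ _ _ Htau) in Hk. apply Hpi. lia.
Qed.

Lemma traj_prob_nonneg pi tau : is_policy eS eA T pi -> In tau (all_trajs eS eA T) ->
  0 <= traj_prob p1 P pi tau.
Proof.
  intros Hpi Htau. rewrite traj_prob_factor.
  apply Rmult_le_pos; [apply traj_weight_nonneg |].
  now apply prod_steps_nonneg, policy_steps_nonneg.
Qed.

Lemma traj_prob_from_mass pi n t s a :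
  (forall k s, (t < k <= t + n)%nat -> sumR eA (pi k s) = 1) ->
  sumR (all_seqs (list_prod eS eA) n) (traj_prob_from P pi t s a) = pi t s a.
Proof.
  revert t s a. induction n as [|n IH]; intros t s a Hpi; simpl; [ring|].
  rewrite sumR_flat_map, sumR_list_prod.
  transitivity (pi t s a * sumR eS (P s a)); [|rewrite P_mass; ring].
  rewrite <- sumR_scal. apply sumR_ext_in. intros s' _.
  rewrite <- (Rmult_1_r (P s a s')), <- (Hpi (S t) s') by lia.
  rewrite <- !sumR_scal. apply sumR_ext_in. intros a' _.
  rewrite sumR_map. simpl. rewrite !sumR_scal, IH by (intros; apply Hpi; lia). ring.
Qed.

Lemma traj_prob_mass pi : (1 <= T)%nat -> is_policy eS eA T pi ->
  sumR (all_trajs eS eA T) (traj_prob p1 P pi) = 1.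
Proof.
  intros HT Hpi. unfold all_trajs. rewrite <- (Nat.succ_pred_pos T) by lia. simpl.
  rewrite sumR_flat_map, sumR_list_prod, <- p1_mass. apply sumR_ext_in. intros s _.
  rewrite <- (Rmult_1_r (p1 s)), <- (proj2 (Hpi 1%nat ltac:(lia) s)), <- sumR_scal.
  apply sumR_ext_in. intros a _. rewrite sumR_map. simpl.
  rewrite sumR_scal, traj_prob_from_mass by (intros; apply Hpi; lia). ring.
Qed.


Lemma traj_prob_pos_inv pi tau : is_policy eS eA T pi -> In tau (all_trajs eS eA T) ->
  0 < traj_prob p1 P pi tau ->
  0 < traj_weight tau /\ Forall_steps (fun k s a => 0 < pi k s a) 1 tau.
Proof.
  intros Hpi Htau Hpos. rewrite traj_prob_factor in Hpos.
  pose proof (traj_weight_nonneg tau).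
  pose proof (policy_steps_nonneg pi tau Hpi Htau) as Hnn.
  pose proof (prod_steps_nonneg _ _ _ Hnn).
  split; [nra | apply prod_steps_pos_inv; [assumption | nra]].
Qed.

(* The dynamics factor [traj_weight] is common to both trajectory probabilities, so it
   cancels from the log-likelihood ratio. *)
Lemma log_reward_on_traj pi pic tau :
  is_policy eS eA T pi -> is_policy eS eA T pic -> In tau (all_trajs eS eA T) ->
  0 < traj_prob p1 P pi tau ->
  if Rltb 0 (traj_prob p1 P pic tau) then
    reward_sum (log_reward pic) 1 tau =
      Some (sum_steps (fun k s a => ln (pic k s a)) 1 tau) /\
    sum_steps (fun k s a => ln (pic k s a)) 1 tau
      - sum_steps (fun k s a => ln (pi k s a)) 1 tau =
    ln (traj_prob p1 P pic tau) - ln (traj_prob p1 P pi tau)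
  else reward_sum (log_reward pic) 1 tau = None.
Proof.
  intros Hpi Hpic Htau Hpos.
  destruct (traj_prob_pos_inv pi tau Hpi Htau Hpos) as [Hw Hsteps].
  destruct (Rltb_spec 0 (traj_prob p1 P pic tau)) as [Hposc|Hzero].
  - destruct (traj_prob_pos_inv pic tau Hpic Htau Hposc) as [_ Hstepsc].
    split; [now apply reward_sum_log_reward_pos|].
    rewrite !traj_prob_factor, !ln_mult, <- !ln_prod_steps
      by (try apply prod_steps_pos; assumption).
    ring.
  - apply reward_sum_log_reward_zero.
    pose proof (traj_prob_nonneg pic tau Hpic Htau) as Hnn. rewrite traj_prob_factor in *.
    assert (Hprod : traj_weight tau * prod_steps pic 1 tau = 0) by lra.
    destruct (Rmult_integral _ _ Hprod); [lra | assumption].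
Qed.

Lemma J_obj_log_reward pi pic :
  is_policy eS eA T pi -> is_policy eS eA T pic ->
  J_obj eS eA T p1 P pi (log_reward pic) =
  neg_kl (all_trajs eS eA T) (traj_prob p1 P pi) (traj_prob p1 P pic).
Proof.
  intros Hpi Hpic. unfold J_obj, neg_kl.
  set (L := all_trajs eS eA T).
  rewrite (existsb_ext_in _ (fun tau => Rltb 0 (traj_prob p1 P pi tau)
             && negb (Rltb 0 (traj_prob p1 P pic tau))) L).
  2:{ intros tau Htau. destruct (Rltb_spec 0 (traj_prob p1 P pi tau)) as [Hpos|];
      [|reflexivity].
      pose proof (log_reward_on_traj pi pic tau Hpi Hpic Htau Hpos) as H.
      destruct Rltb; simpl; [destruct H as [-> _] | rewrite H]; reflexivity. }
  destruct existsb eqn:Hsupp; [reflexivity|]. rewrite existsb_false_iff in Hsupp.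
  f_equal. apply sumR_ext_in. intros tau Htau. specialize (Hsupp tau Htau).
  destruct (Rltb_spec 0 (traj_prob p1 P pi tau)) as [Hpos|]; [|reflexivity].
  pose proof (log_reward_on_traj pi pic tau Hpi Hpic Htau Hpos) as H.
  destruct Rltb; [|discriminate]. destruct H as [-> Hratio]. now rewrite Hratio.
Qed.

End MDP.

Section Optimality.
Context {St Ac : Type} (eS : list St) (eA : list Ac) (T : nat)
  (p1 : St -> R) (P : St -> Ac -> St -> R).
Hypothesis T_ge1 : (1 <= T)%nat.
Hypothesis p1_ge0 : forall s, 0 <= p1 s.
Hypothesis p1_mass : sumR eS p1 = 1.
Hypothesis P_ge0 : forall s a s', 0 <= P s a s'.
Hypothesis P_mass : forall s a, sumR eS (P s a) = 1.
Variable pic : policy St Ac.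
Hypothesis pic_policy : is_policy eS eA T pic.

Definition same_traj_dist (pi : policy St Ac) : Prop :=
  is_policy eS eA T pi /\
  forall tau, In tau (all_trajs eS eA T) -> traj_prob p1 P pi tau = traj_prob p1 P pic tau.

Lemma argmax_J_log_reward_iff pi :
  argmax_J eS eA T p1 P (log_reward pic) pi <-> same_traj_dist pi.
Proof.
  assert (Hbound : forall pi', is_policy eS eA T pi' -> _) by
    (intros pi' Hpi'; exact (neg_kl_le0 (all_trajs eS eA T) _ _
       (fun tau => traj_prob_nonneg eS eA T p1 P p1_ge0 P_ge0 pi' tau Hpi')
       (fun tau => traj_prob_nonneg eS eA T p1 P p1_ge0 P_ge0 pic tau pic_policy)
       (eq_trans (traj_prob_mass eS eA T p1 P p1_mass P_mass pi' T_ge1 Hpi')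
          (eq_sym (traj_prob_mass eS eA T p1 P p1_mass P_mass pic T_ge1 pic_policy))))).
  split.
  - intros [Hpi Hmax]. split; [assumption|].
    specialize (Hmax pic pic_policy).
    rewrite !J_obj_log_reward, neg_kl_self in Hmax by assumption.
    now apply (Hbound pi Hpi).
  - intros [Hpi Hsame]. split; [assumption|]. intros pi' Hpi'.
    rewrite !J_obj_log_reward, (neg_kl_ext _ _ _ _ Hsame), neg_kl_self by assumption.
    apply (Hbound pi' Hpi').
Qed.

Variable p : traj St Ac -> R.
Hypothesis p_ge0 : forall tau, In tau (all_trajs eS eA T) -> 0 <= p tau.
Hypothesis p_mass : sumR (all_trajs eS eA T) p = 1.
Hypothesis pic_sqrt : forall tau, In tau (all_trajs eS eA T) ->
  traj_prob p1 P pic tau =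
  sqrt (p tau) / sumR (all_trajs eS eA T) (fun tau' => sqrt (p tau')).

Lemma regret_retry_cost pi :
  regret eS eA T p1 P p pi = retry_cost (all_trajs eS eA T) p (traj_prob p1 P pi).
Proof. reflexivity. Qed.

Lemma argmin_regret_iff pi : argmin_regret eS eA T p1 P p pi <-> same_traj_dist pi.
Proof.
  pose proof (sumR_sqrt_pos _ _ p_ge0 p_mass) as Z_gt0.
  assert (Hbound : forall pi', is_policy eS eA T pi' -> _) by
    (intros pi' Hpi'; exact (retry_cost_ge (all_trajs eS eA T) p (traj_prob p1 P pi')
       p_ge0 Z_gt0 (fun tau => traj_prob_nonneg eS eA T p1 P p1_ge0 P_ge0 pi' tau Hpi')
       (traj_prob_mass eS eA T p1 P p1_mass P_mass pi' T_ge1 Hpi'))).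
  split.
  - intros [Hpi Hmin]. split; [assumption|].
    specialize (Hmin pic pic_policy).
    rewrite !regret_retry_cost, (retry_cost_opt _ _ _ p_ge0 Z_gt0 pic_sqrt) in Hmin.
    intros tau Htau. rewrite pic_sqrt by assumption. now apply (Hbound pi Hpi).
  - intros [Hpi Hsame]. split; [assumption|]. intros pi' Hpi'.
    rewrite !regret_retry_cost, (retry_cost_opt _ _ _ p_ge0 Z_gt0).
    + apply (Hbound pi' Hpi').
    + intros tau Htau. rewrite Hsame; auto.
Qed.

End Optimality.

Theorem lemma1
  (St Ac : Type) (eS : list St) (eA : list Ac)
  (HS : finite_enum eS) (HA : finite_enum eA)
  (T : nat) (HT : (1 <= T)%nat)
  (p1 : St -> R) (P : St -> Ac -> St -> R)
  (Hp1 : (forall s, 0 <= p1 s) /\ sumR eS p1 = 1)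
  (HP : forall s a, (forall s', 0 <= P s a s') /\ sumR eS (P s a) = 1)
  (p : traj St Ac -> R)
  (Hp : (forall tau, In tau (all_trajs eS eA T) -> 0 <= p tau) /\
        sumR (all_trajs eS eA T) p = 1)
  (Hcirc : exists pic : policy St Ac,
      is_policy eS eA T pic /\
      forall tau, In tau (all_trajs eS eA T) ->
        traj_prob p1 P pic tau =
        sqrt (p tau) / sumR (all_trajs eS eA T) (fun tau' => sqrt (p tau'))) :
  exists r : reward St Ac,
    forall pi : policy St Ac,
      argmin_regret eS eA T p1 P p pi <-> argmax_J eS eA T p1 P r pi.
Proof.
  destruct Hcirc as [pic [Hpic Hsqrt]], Hp1 as [Hp1 Hp1_mass], Hp as [Hp Hp_mass].
  assert (HP0 : forall s a s', 0 <= P s a s') by apply HP.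
  assert (HP_mass : forall s a, sumR eS (P s a) = 1) by apply HP.
  exists (log_reward pic). intros pi.
  rewrite (argmin_regret_iff eS eA T p1 P HT Hp1 Hp1_mass HP0 HP_mass pic Hpic p Hp Hp_mass
             Hsqrt).
  now rewrite (argmax_J_log_reward_iff eS eA T p1 P HT Hp1 Hp1_mass HP0 HP_mass pic Hpic).
Qed.
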